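(* If $H$ is an abelian subgroup of $\operatorname{Sym}_n$ and $S=S_n(H)$, with $n\geq 3$, then $SzS$ is a prime ideal of $S$.
   Context: $S_n(H)$ is the monoid with presentation $\langle a_1,\dots,a_n \mid a_1\cdots a_n = a_{\sigma(1)}\cdots a_{\sigma(n)},\ \sigma\in H\rangle$, and $z=a_1a_2\cdots a_n$. An ideal $Q$ of a monoid $S$ is prime if $Q\neq S$ and, for $u,v\in S$, $uSv\subseteq Q$ implies $u\in Q$ or $v\in Q$. *)

From mathcomp Require Import all_boot all_fingroup.
From Stdlib Require Import Relations.
Set Implicit Arguments. Unset Strict Implicit. Unset Printing Implicit Defensive.

(* Words over the alphabet {a_1,...,a_n}, indexed by 'I_n (a_{i+1} <-> i). *)
Definition word (n : nat) := seq 'I_n.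

Definition zword (n : nat) : word n := enum 'I_n.

Definition sword (n : nat) (s : {perm 'I_n}) : word n := map s (zword n).

Inductive pstep (n : nat) (H : {set {perm 'I_n}}) : word n -> word n -> Prop :=
  | PStep (p q : word n) (s : {perm 'I_n}) :
      s \in H -> pstep H (p ++ zword n ++ q) (p ++ sword s ++ q).

(* The congruence on the free monoid generated by the relations
   z = a_{s(1)}...a_{s(n)}, s in H: equal elements of S_n(H). *)
Definition peq (n : nat) (H : {set {perm 'I_n}}) : relation (word n) :=
  clos_refl_sym_trans _ (pstep H).

(* Subsets of S_n(H) represented as predicates on words, closed under peq. *)
Definition respects (n : nat) (H : {set {perm 'I_n}}) (Q : word n -> Prop) :=
  forall u v, peq H u v -> Q u -> Q v.

Definition is_ideal (n : nat) (H : {set {perm 'I_n}}) (Q : word n -> Prop) :=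
  respects H Q /\ forall u s t, Q u -> Q (s ++ u ++ t).

Definition is_prime_ideal (n : nat) (H : {set {perm 'I_n}}) (Q : word n -> Prop) :=
  [/\ is_ideal H Q,
      (exists w, ~ Q w) &
      forall u v, (forall w, Q (u ++ w ++ v)) -> Q u \/ Q v].

Definition SzS (n : nat) (H : {set {perm 'I_n}}) (w : word n) : Prop :=
  exists p q, peq H w (p ++ zword n ++ q).

(* Both sides of every defining relation contain a factor a_{s(1)}...a_{s(n)}
   with s in H, so the elements of SzS are exactly the words containing such a
   factor.  The letters of such a factor are pairwise distinct, hence an
   occurrence of one inside u a^n v lies in u, lies in v, or meets a^n only in
   its last or its first letter.  In the latter two cases a is determined by u
   (resp. v): it is the letter missing from the last (first) n-1 letters.
   With three letters available, some a^n falls in neither boundary case, so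
   u or v itself contains a factor. *)

From mathcomp Require Import all_boot all_fingroup.
From mathcomp Require Import zify.
From Stdlib Require Import Relations.

Set Implicit Arguments.
Unset Strict Implicit.
Unset Printing Implicit Defensive.

Section Factors.
Variable T : eqType.
Implicit Types (u v w : seq T) (a : T).

Lemma prefix_cat_split s1 s2 w :
  prefix w (s1 ++ s2) -> prefix w s1 \/ exists2 w2, w = s1 ++ w2 & prefix w2 s2.
Proof.
elim: s1 w => [|x s1 IH] w; first by right; exists w.
case: w => [|y w] /=; first by left.
case/andP=> /eqP-> /IH[pre|[w2 -> pre]]; first by left; rewrite /= eqxx.
by right; exists w2.
Qed.

Lemma uniq_not_prefix_nseq v w a j :
  uniq w -> 1 < size w -> 1 < j -> ~~ prefix w (nseq j a ++ v).
Proof.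
case: w => [|x [|y w]] //; case: j => [|[|j]] // /andP[xNyw _] _ _ /=.
by apply/and3P=> -[/eqP xa /eqP ya _]; move: xNyw; rewrite inE xa ya eqxx.
Qed.

Lemma infix_nseq_cat v w a j :
  uniq w -> j <= size w -> infix w (nseq j a ++ v) -> infix w v || prefix w (a :: v).
Proof.
move=> w_uniq; elim: j => [|j IH] j_le; first by move->.
case/orP=> [pre|]; last exact: IH (ltnW j_le).
case: j {IH} j_le pre => [_ ->|j j_le pre]; first by rewrite orbT.
have j_gt1 : 1 < j.+2 by [].
by rewrite (negbTE (uniq_not_prefix_nseq v a w_uniq (leq_trans j_gt1 j_le) j_gt1)) in pre.
Qed.

Lemma infix_uniq_cat_nseq u v w a : uniq w ->
  infix w (u ++ nseq (size w) a ++ v) ->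
  [\/ infix w u, infix w v, suffix w (rcons u a) | prefix w (a :: v)].
Proof.
move=> w_uniq; elim: u => [|x u IH].
  by case/(infix_nseq_cat w_uniq (leqnn _))/orP; [apply: Or42 | apply: Or44].
rewrite cat_cons infix_consl -cat_cons => /orP[|/IH[]]; last 4 first.
- by move=> inf; apply: Or41; apply: (infix_catl [:: x]).
- by apply: Or42.
- by move=> suf; apply: Or43; apply: (suffix_catr [:: x]).
- by apply: Or44.
case/prefix_cat_split=> [/prefixW | [w2 w_def]]; first by apply: Or41.
case: w2 w_def => [|y [|y' w2]] w_def.
- by rewrite cats0 in w_def; rewrite w_def infix_refl; apply: Or41.
- rewrite {1}w_def size_cat /= addnS /= andbT => /eqP y_a.
  by apply: Or43; rewrite w_def y_a cats1 suffix_refl.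
- have w2_uniq : uniq [:: y, y' & w2] by move: w_uniq; rewrite w_def cat_uniq => /and3P[].
  have w_size : 1 < size w by rewrite w_def size_cat /=; lia.
  by move: (uniq_not_prefix_nseq v a w2_uniq isT w_size) => /negP.
Qed.

Lemma suffix_rcons_perm_eq u s1 s2 a b : s1 != [::] ->
  suffix s1 (rcons u a) -> suffix s2 (rcons u b) -> perm_eq s1 s2 -> a = b.
Proof.
rewrite -size_eq0 -lt0n => s1_gt0 + + eq12.
rewrite !suffixE !size_rcons -(perm_size eq12) => /eqP s1_def /eqP s2_def.
move: eq12; rewrite -s1_def -s2_def !drop_rcons; try lia.
rewrite -!cats1 perm_cat2l => /perm_mem/(_ a).
by rewrite !inE eqxx => /esym/eqP.
Qed.

Lemma prefix_cons_perm_eq v s1 s2 a b : s1 != [::] ->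
  prefix s1 (a :: v) -> prefix s2 (b :: v) -> perm_eq s1 s2 -> a = b.
Proof.
rewrite -!suffix_rev !rev_cons -(perm_rev s1) perm_sym -(perm_rev s2) perm_sym.
by move=> s1N0; apply: suffix_rcons_perm_eq; rewrite -size_eq0 size_rev size_eq0.
Qed.

End Factors.

Lemma sword1 n : sword (1 : {perm 'I_n}) = zword n.
Proof. by rewrite /sword (eq_map (perm1 (T := 'I_n))) map_id. Qed.

Lemma size_sword n (s : {perm 'I_n}) : size (sword s) = n.
Proof. by rewrite size_map size_enum_ord. Qed.

Lemma uniq_sword n (s : {perm 'I_n}) : uniq (sword s).
Proof. by rewrite map_inj_uniq ?enum_uniq //; apply: perm_inj. Qed.

Lemma perm_sword n (s : {perm 'I_n}) : perm_eq (sword s) (zword n).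
Proof.
apply: uniq_perm; rewrite ?uniq_sword ?enum_uniq // => x.
by rewrite mem_enum; apply/mapP; exists (s^-1 x)%g; rewrite ?mem_enum ?permKV.
Qed.

Section Presentation.
Variables (n : nat) (H : {group {perm 'I_n}}).

Definition has_sword_factor (w : word n) := [exists s in H, infix (sword s) w].
Definition ends_with_sword (u : word n) (a : 'I_n) :=
  [exists s in H, suffix (sword s) (rcons u a)].
Definition starts_with_sword (v : word n) (a : 'I_n) :=
  [exists s in H, prefix (sword s) (a :: v)].

Lemma pstep_has_sword_factor x y :
  pstep H x y -> has_sword_factor x && has_sword_factor y.
Proof.
case=> p q s s_H; apply/andP; split; apply/exists_inP.
  by exists 1%g; rewrite ?group1 // sword1 infix_infix.
by exists s; rewrite ?infix_infix.
Qed.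

Lemma peq_has_sword_factor x y : peq H x y -> has_sword_factor x = has_sword_factor y.
Proof.
by elim=> {x y} [x y /pstep_has_sword_factor/andP[-> ->] | | x y _ -> | x y z _ -> _ ->].
Qed.

Lemma SzSP w : reflect (SzS H w) (has_sword_factor w).
Proof.
apply: (iffP idP) => [/exists_inP[s s_H /infixP[p [q ->]]] | [p [q w_z]]].
  by exists p, q; apply/rst_sym/rst_step; apply: PStep.
rewrite (peq_has_sword_factor w_z); apply/exists_inP.
by exists 1%g; rewrite ?group1 // sword1 infix_infix.
Qed.

Lemma has_sword_factor_around u v a :
  has_sword_factor (u ++ nseq n a ++ v) ->
  [|| has_sword_factor u, has_sword_factor v,
      ends_with_sword u a | starts_with_sword v a].
Proof.
case/exists_inP=> s s_H.
have := infix_uniq_cat_nseq (u := u) (v := v) (a := a) (uniq_sword s).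
rewrite size_sword => /[apply] factor; apply/or4P.
by case: factor => f; [apply: Or41 | apply: Or42 | apply: Or43 | apply: Or44];
  apply/exists_inP; exists s.
Qed.

Lemma sword_nonempty (a : 'I_n) (s : {perm 'I_n}) : sword s != [::].
Proof. by rewrite -size_eq0 size_sword -lt0n (leq_ltn_trans _ (ltn_ord a)). Qed.

Lemma perm_eq_sword (s t : {perm 'I_n}) : perm_eq (sword s) (sword t).
Proof. by rewrite (perm_trans (perm_sword s)) // perm_sym perm_sword. Qed.

Lemma card_ends_with_sword u : #|ends_with_sword u| <= 1.
Proof.
apply/card_le1_eqP => a b /exists_inP[s _ s_a] /exists_inP[t _ t_b].
exact: suffix_rcons_perm_eq (sword_nonempty b t) t_b s_a (perm_eq_sword t s).
Qed.

Lemma card_starts_with_sword v : #|starts_with_sword v| <= 1.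
Proof.
apply/card_le1_eqP => a b /exists_inP[s _ s_a] /exists_inP[t _ t_b].
exact: prefix_cons_perm_eq (sword_nonempty b t) t_b s_a (perm_eq_sword t s).
Qed.

End Presentation.

Lemma card_le2_cover (T : finType) (P Q : pred T) :
  #|P| <= 1 -> #|Q| <= 1 -> (forall x, P x || Q x) -> #|T| <= 2.
Proof.
move=> P_le1 Q_le1 PQ; apply: leq_trans (_ : #|[predU P & Q]| <= 2).
  by apply: subset_leq_card; apply/subsetP => x _; rewrite inE PQ.
rewrite -(leq_add2r #|[predI P & Q]|) cardUI.
by apply: leq_trans (leq_add P_le1 Q_le1) _; rewrite leq_addr.
Qed.

Theorem lemma4p2 (n : nat) (H : {group {perm 'I_n}}) :
  3 <= n -> abelian H -> is_prime_ideal H (SzS H).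
Proof.
move=> n_ge3 _; split.
- split=> [x y x_y /SzSP x_f | u s t /SzSP/exists_inP[g g_H u_g]]; apply/SzSP.
    by rewrite -(peq_has_sword_factor x_y).
  by apply/exists_inP; exists g; rewrite ?(infix_catl _ (infix_catr _ u_g)).
- exists [::] => /SzSP/exists_inP[g _].
  by rewrite infixs0 -size_eq0 size_sword; case: n n_ge3 {H g}.
- move=> u v uSv.
  have [/SzSP u_SzS | u_free] := boolP (has_sword_factor H u); first by left.
  have [/SzSP v_SzS | v_free] := boolP (has_sword_factor H v); first by right.
  suff : n <= 2 by rewrite leqNgt n_ge3.
  rewrite -[n in n <= _]card_ord.
  apply: card_le2_cover (card_ends_with_sword H u) (card_starts_with_sword H v) _ => a.
  have /SzSP/has_sword_factor_around := uSv (nseq n a).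
  by rewrite (negbTE u_free) (negbTE v_free).
Qed.
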